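(* For every convex quadrilateral $T\subset\mathbb{R}^2$ whose four vertices lie on the four different coordinate semiaxes (one vertex on each of the positive $x$-semiaxis, negative $x$-semiaxis, positive $y$-semiaxis, negative $y$-semiaxis, all distinct from the origin), one has $P_{\gamma_2}(T)<\sqrt{2/\pi}$. Moreover the constant is sharp: for the rhombi $T_n$ with vertices $(n,0),(0,1/n),(-n,0),(0,-1/n)$ one has $\lim_{n\to\infty}P_{\gamma_2}(T_n)=\sqrt{2/\pi}$.
   Context: For a convex set $\Omega\subset\mathbb{R}^2$, its Gaussian perimeter is $P_{\gamma_2}(\Omega)=\frac{1}{2\pi}\int_{\partial\Omega}\exp\left(-\frac{|\mathbf{x}|^2}{2}\right)d\mathcal{H}^1(\mathbf{x})$, where $\mathcal{H}^1$ is the one-dimensional Hausdorff measure. *)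

From Stdlib Require Import Reals.
From Coquelicot Require Import Coquelicot.
Open Scope R_scope.

Definition pt := (R * R)%type.

Definition nrm2 (p : pt) : R := fst p ^ 2 + snd p ^ 2.
Definition seglen (p q : pt) : R := sqrt ((fst q - fst p) ^ 2 + (snd q - snd p) ^ 2).

Definition gweight (x : pt) : R := exp (- nrm2 x / 2).

(* Integral of the Gaussian weight against H^1 on the segment [p,q],
   via the arclength parametrisation t |-> p + t (q - p), t in [0,1]. *)
Definition seg_gauss (p q : pt) : R :=
  seglen p q *
  RInt (fun t => gweight (fst p + t * (fst q - fst p), snd p + t * (snd q - snd p))) 0 1.

(* Gaussian perimeter of the convex polygon with vertices listed cyclically:
   (1/(2 pi)) * integral of exp(-|x|^2/2) over its boundary. *)
Definition gauss_perim_quad (v1 v2 v3 v4 : pt) : R :=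
  / (2 * PI) * (seg_gauss v1 v2 + seg_gauss v2 v3 + seg_gauss v3 v4 + seg_gauss v4 v1).

Definition semiaxis_quad (a b c d : R) : R :=
  gauss_perim_quad (a, 0) (0, b) (- c, 0) (0, - d).

From Stdlib Require Import Reals Lra Psatz.
From Coquelicot Require Import Coquelicot.
Open Scope R_scope.

(* When p and q are
   orthogonal, |p + t (q - p)|^2 = X (1 - t)^2 + Y t^2 with X = |p|^2, Y = |q|^2,
   and pairing t with 1 - t (a rearrangement inequality) shows that the Gaussian
   integral over the edge is at most Phi(sqrt (X + Y)), where
   Phi(r) = int_0^r exp(-s^2/2) ds is [gauss_int r].  The classical identity
   Phi(r)^2 = pi/2 - 2 int_0^1 exp(-r^2 (1 + s^2)/2) / (1 + s^2) ds
   gives Phi(r) < sqrt(pi/2), so the four edges contribute less than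
   4 sqrt(pi/2) / (2 pi) = sqrt(2/pi).  For the rhombi, each edge is at least
   exp(-1/(2 n^2)) Phi(n), which tends to sqrt(pi/2). *)

Lemma exp_le_compat x y : x <= y -> exp x <= exp y.
Proof. intros [Hlt|Heq]; [left; exact (exp_increasing _ _ Hlt) | subst; right; reflexivity]. Qed.

Lemma ex_RInt_derivable (f : R -> R) a b : (forall x, ex_derive f x) -> ex_RInt f a b.
Proof.
  intros Hf. apply (@ex_RInt_continuous R_CompleteNormedModule).
  intros x _. exact (ex_derive_continuous f x (Hf x)).
Qed.

Lemma RInt_mult_l (c : R) (f : R -> R) a b :
  ex_RInt f a b -> RInt (fun t => c * f t) a b = c * RInt f a b.
Proof. exact (RInt_scal (V := R_CompleteNormedModule) f a b c). Qed.

Lemma ex_RInt_reflect (f : R -> R) a b :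
  ex_RInt f a b -> ex_RInt (fun t => f (a + b - t)) a b.
Proof.
  intros Hf.
  apply (ex_RInt_ext (fun t => scal (-1) (scal (-1) (f (-1 * t + (a + b)))))).
  - intros t _. unfold scal; simpl; unfold mult; simpl.
    replace (-1 * t + (a + b)) with (a + b - t) by ring. ring.
  - apply (ex_RInt_scal (V := R_NormedModule)), (ex_RInt_comp_lin (V := R_NormedModule)).
    replace (-1 * a + (a + b)) with b by ring. replace (-1 * b + (a + b)) with a by ring.
    now apply ex_RInt_swap.
Qed.

Lemma RInt_reflect (f : R -> R) a b :
  ex_RInt f a b -> RInt (fun t => f (a + b - t)) a b = RInt f a b.
Proof.
  intros Hf.
  assert (Hba : ex_RInt f (-1 * a + (a + b)) (-1 * b + (a + b))).
  { replace (-1 * a + (a + b)) with b by ring. replace (-1 * b + (a + b)) with a by ring.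
    now apply ex_RInt_swap. }
  assert (Hlin := RInt_comp_lin (V := R_CompleteNormedModule) f (-1) (a + b) a b Hba).
  replace (-1 * a + (a + b)) with b in Hlin by ring.
  replace (-1 * b + (a + b)) with a in Hlin by ring.
  rewrite (RInt_ext _ (fun t => -1 * f (a + b - t))) in Hlin.
  2:{ intros t _. unfold scal; simpl; unfold mult; simpl. do 2 f_equal. ring. }
  rewrite RInt_mult_l in Hlin by now apply ex_RInt_reflect.
  rewrite <- (opp_RInt_swap (V := R_CompleteNormedModule) f a b Hf) in Hlin.
  change (-1 * RInt (fun t => f (a + b - t)) a b = - RInt f a b) in Hlin. lra.
Qed.

Lemma RInt_symmetrize (f : R -> R) a b :
  ex_RInt f a b -> RInt (fun t => f t + f (a + b - t)) a b = 2 * RInt f a b.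
Proof.
  intros Hf.
  change (RInt (fun t => plus (f t) (f (a + b - t))) a b = 2 * RInt f a b).
  rewrite (RInt_plus (V := R_CompleteNormedModule)) by auto using ex_RInt_reflect.
  rewrite RInt_reflect by exact Hf.
  unfold plus; simpl. ring.
Qed.

Definition gauss (t : R) : R := exp (- t ^ 2 / 2).
Definition gauss_int (x : R) : R := RInt gauss 0 x.

Lemma is_derive_gauss x : is_derive gauss x (- x * gauss x).
Proof.
  unfold gauss. auto_derive; [easy |].
  replace (- (x * (x * 1)) * / 2) with (- x ^ 2 / 2) by field. field.
Qed.

Lemma continuous_gauss x : continuous gauss x.
Proof. apply (ex_derive_continuous gauss x). eexists. apply is_derive_gauss. Qed.

Lemma ex_RInt_gauss a b : ex_RInt gauss a b.
Proof. apply ex_RInt_derivable. intros x. eexists. apply is_derive_gauss. Qed.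

Lemma is_derive_gauss_int x : is_derive gauss_int x (gauss x).
Proof.
  apply (is_derive_RInt (V := R_CompleteNormedModule) gauss gauss_int 0).
  - apply filter_forall. intros y. apply RInt_correct, ex_RInt_gauss.
  - apply continuous_gauss.
Qed.

Lemma gauss_int0 : gauss_int 0 = 0.
Proof. apply (RInt_point (V := R_CompleteNormedModule)). Qed.

Lemma gauss_int_ge0 x : 0 <= x -> 0 <= gauss_int x.
Proof.
  intros Hx. apply RInt_ge_0; [exact Hx | apply ex_RInt_gauss |].
  intros t _. left. apply exp_pos.
Qed.

Lemma gauss_int_scale x : x * RInt (fun s => gauss (x * s)) 0 1 = gauss_int x.
Proof.
  assert (Hlin := RInt_comp_lin (V := R_CompleteNormedModule) gauss x 0 0 1 (ex_RInt_gauss _ _)).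
  replace (x * 0 + 0) with 0 in Hlin by ring.
  replace (x * 1 + 0) with x in Hlin by ring.
  unfold gauss_int. rewrite <- Hlin, <- RInt_mult_l.
  - apply RInt_ext. intros s _. now rewrite Rplus_0_r.
  - apply ex_RInt_derivable. intros s. unfold gauss. auto_derive. easy.
Qed.

(* [owen x] is 2 pi times Owen's T function T(x, 1); differentiating under the
   integral sign gives [- gauss x * gauss_int x], so [gauss_int ^ 2 + 2 owen] is
   constant. *)
Definition owen_integrand (x s : R) : R := exp (- (x ^ 2 * (1 + s ^ 2)) / 2) / (1 + s ^ 2).
Definition owen (x : R) : R := RInt (owen_integrand x) 0 1.

Lemma is_derive_owen_integrand x s :
  is_derive (fun y => owen_integrand y s) x (- x * exp (- (x ^ 2 * (1 + s ^ 2)) / 2)).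
Proof.
  assert (Hs : 0 < 1 + s ^ 2) by nra.
  unfold owen_integrand. auto_derive; [lra |].
  replace (- (x * (x * 1) * (1 + s * (s * 1))) * / 2) with (- (x ^ 2 * (1 + s ^ 2)) / 2)
    by field.
  field. lra.
Qed.

Lemma continuity_2d_owen_derivative x s :
  continuity_2d_pt (fun u v => Derive (fun y => owen_integrand y v) u) x s.
Proof.
  apply continuity_2d_pt_ext with
    (f := fun u v => - u * exp (- (u * u * (1 + v * v)) / 2)).
  { intros u v. symmetry. apply is_derive_unique.
    replace (u * u * (1 + v * v)) with (u ^ 2 * (1 + v ^ 2)) by ring.
    apply is_derive_owen_integrand. }
  apply continuity_2d_pt_mult.
  - apply continuity_2d_pt_opp, continuity_2d_pt_id1.
  - apply continuity_1d_2d_pt_comp.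
    + apply derivable_continuous_pt, derivable_pt_exp.
    + apply continuity_2d_pt_mult; [apply continuity_2d_pt_opp | apply continuity_2d_pt_const].
      apply continuity_2d_pt_mult.
      * apply continuity_2d_pt_mult; apply continuity_2d_pt_id1.
      * apply continuity_2d_pt_plus; [apply continuity_2d_pt_const |].
        apply continuity_2d_pt_mult; apply continuity_2d_pt_id2.
Qed.

Lemma ex_RInt_owen_integrand x a b : ex_RInt (owen_integrand x) a b.
Proof.
  apply ex_RInt_derivable. intros s.
  assert (Hs : 0 < 1 + s ^ 2) by nra.
  unfold owen_integrand. auto_derive. lra.
Qed.

Lemma is_derive_owen x : is_derive owen x (- gauss x * gauss_int x).
Proof.
  replace (- gauss x * gauss_int x)
    with (RInt (fun s => Derive (fun y => owen_integrand y s) x) 0 1).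
  - apply (is_derive_RInt_param owen_integrand 0 1 x).
    + apply filter_forall. intros y s _. eexists. apply is_derive_owen_integrand.
    + intros s _. apply continuity_2d_owen_derivative.
    + apply filter_forall. intros y. apply ex_RInt_owen_integrand.
  - rewrite <- gauss_int_scale, <- Rmult_assoc, <- RInt_mult_l.
    + apply RInt_ext. intros s _.
      erewrite is_derive_unique by apply is_derive_owen_integrand.
      unfold gauss.
      replace (- exp (- x ^ 2 / 2) * x * exp (- (x * s) ^ 2 / 2))
        with (- x * (exp (- x ^ 2 / 2) * exp (- (x * s) ^ 2 / 2))) by ring.
      rewrite <- exp_plus. f_equal. f_equal. field.
    + apply ex_RInt_derivable. intros s. unfold gauss. auto_derive. easy.
Qed.

Lemma owen0 : owen 0 = PI / 4.
Proof.
  replace (PI / 4) with (atan 1 - atan 0) by (rewrite atan_0, atan_1; ring).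
  apply is_RInt_unique.
  apply (is_RInt_ext (fun s => / (1 + s ^ 2))).
  { intros s _. unfold owen_integrand.
    replace (- (0 ^ 2 * (1 + s ^ 2)) / 2) with 0 by field.
    now rewrite exp_0, Rdiv_1_l. }
  apply (is_RInt_derive (V := R_CompleteNormedModule)).
  - intros s _. apply is_derive_Reals, derivable_pt_lim_atan.
  - intros s _. apply (ex_derive_continuous (fun s => / (1 + s ^ 2))).
    assert (0 < 1 + s ^ 2) by nra. auto_derive. lra.
Qed.

Lemma gauss_int_sqr x : gauss_int x ^ 2 = PI / 2 - 2 * owen x.
Proof.
  set (h y := gauss_int y ^ 2 + 2 * owen y).
  assert (Hh : forall y, is_derive h y 0).
  { intros y.
    replace 0 with (plus (INR 2 * gauss y * gauss_int y ^ 1) (2 * (- gauss y * gauss_int y)))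
      by (unfold plus; simpl; ring).
    apply (is_derive_plus (fun y => gauss_int y ^ 2) (fun y => 2 * owen y)).
    - apply (is_derive_pow gauss_int 2 y _ (is_derive_gauss_int y)).
    - apply (is_derive_scal owen y 2 _ (is_derive_owen y)). }
  destruct (MVT_gen h 0 x (fun _ => 0)) as [c [_ Hc]].
  - intros y _. apply Hh.
  - intros y _. apply derivable_continuous_pt. exists 0. apply is_derive_Reals, Hh.
  - unfold h in Hc. rewrite gauss_int0, owen0 in Hc. lra.
Qed.

Lemma owen_gt0 x : 0 < owen x.
Proof.
  apply Rle_lt_trans with (RInt (fun _ => 0) 0 1).
  { right. rewrite RInt_const. unfold scal; simpl; unfold mult; simpl. ring. }
  apply RInt_lt; [lra | | |].
  - intros s _. apply (ex_derive_continuous (owen_integrand x)).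
    assert (0 < 1 + s ^ 2) by nra. unfold owen_integrand. auto_derive. lra.
  - intros s _. apply continuous_const.
  - intros s _. apply Rdiv_lt_0_compat; [apply exp_pos | nra].
Qed.

Lemma owen_le_gauss x : owen x <= gauss x.
Proof.
  apply Rle_trans with (RInt (fun _ => gauss x) 0 1).
  2:{ right. rewrite RInt_const. unfold scal; simpl; unfold mult; simpl. ring. }
  apply RInt_le; [lra | apply ex_RInt_owen_integrand | apply ex_RInt_const |].
  intros s _. unfold owen_integrand, gauss.
  assert (Hexp : exp (- (x ^ 2 * (1 + s ^ 2)) / 2) <= exp (- x ^ 2 / 2)).
  { apply exp_le_compat. nra. }
  apply Rle_trans with (exp (- (x ^ 2 * (1 + s ^ 2)) / 2)); [| exact Hexp].
  assert (Hs : 1 <= 1 + s ^ 2) by nra.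
  apply Rmult_le_reg_r with (1 + s ^ 2); [lra |].
  unfold Rdiv. rewrite Rmult_assoc, Rinv_l by lra.
  pose proof (exp_pos (- (x ^ 2 * (1 + s ^ 2)) / 2)). nra.
Qed.

Lemma gauss_int_lt x : 0 <= x -> gauss_int x < sqrt (PI / 2).
Proof.
  intros Hx. rewrite <- (sqrt_pow2 (gauss_int x)) by now apply gauss_int_ge0.
  apply sqrt_lt_1; [apply pow2_ge_0 | pose proof PI_RGT_0; lra |].
  rewrite gauss_int_sqr. pose proof (owen_gt0 x). lra.
Qed.

Lemma gauss_int_ge x :
  0 <= x -> sqrt (PI / 2) - 2 / sqrt (PI / 2) * gauss x <= gauss_int x.
Proof.
  intros Hx.
  assert (Hs : 0 < sqrt (PI / 2)) by (apply sqrt_lt_R0; pose proof PI_RGT_0; lra).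
  assert (Hsq : sqrt (PI / 2) ^ 2 = PI / 2) by (apply pow2_sqrt; pose proof PI_RGT_0; lra).
  pose proof (gauss_int_sqr x). pose proof (owen_le_gauss x).
  pose proof (gauss_int_ge0 x Hx). pose proof (gauss_int_lt x Hx).
  apply Rmult_le_reg_l with (sqrt (PI / 2)); [exact Hs |].
  replace (sqrt (PI / 2) * (sqrt (PI / 2) - 2 / sqrt (PI / 2) * gauss x))
    with (sqrt (PI / 2) ^ 2 - 2 * gauss x) by (field; lra).
  nra.
Qed.

Lemma gauss_le_inv x : 0 < x -> gauss x <= / x.
Proof.
  intros Hx. unfold gauss. replace (- x ^ 2 / 2) with (- (x ^ 2 / 2)) by field.
  rewrite exp_Ropp. apply Rinv_le_contravar; [exact Hx |].
  pose proof (exp_ineq1_le (x ^ 2 / 2)). nra.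
Qed.

Lemma is_lim_gauss_p_infty : is_lim gauss p_infty 0.
Proof.
  apply (is_lim_le_le_loc (fun _ => 0) (fun x => / x)).
  - exists 0. intros x Hx. split; [left; apply exp_pos | now apply gauss_le_inv].
  - apply is_lim_const.
  - apply (is_lim_inv (fun x => x) p_infty p_infty); [apply is_lim_id | discriminate].
Qed.

Lemma is_lim_gauss_int : is_lim gauss_int p_infty (sqrt (PI / 2)).
Proof.
  apply (is_lim_le_le_loc (fun x => sqrt (PI / 2) - 2 / sqrt (PI / 2) * gauss x)
                          (fun _ => sqrt (PI / 2))).
  - exists 0. intros x Hx. split; [apply gauss_int_ge | left; apply gauss_int_lt]; lra.
  - eapply is_lim_minus; [apply is_lim_const | apply is_lim_scal_l, is_lim_gauss_p_infty |].
    unfold is_Rbar_minus, is_Rbar_plus; simpl. rewrite Rmult_0_r, Ropp_0, Rplus_0_r. reflexivity.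
  - apply is_lim_const.
Qed.

Definition orth_seg_weight (X Y t : R) : R := exp (- (X * (1 - t) ^ 2 + Y * t ^ 2) / 2).
Definition orth_seg_gauss (X Y : R) : R := sqrt (X + Y) * RInt (orth_seg_weight X Y) 0 1.

Lemma ex_RInt_orth_seg_weight X Y a b : ex_RInt (orth_seg_weight X Y) a b.
Proof. apply ex_RInt_derivable. intros t. unfold orth_seg_weight. auto_derive. easy. Qed.

Lemma orth_seg_gauss_sym X Y : orth_seg_gauss X Y = orth_seg_gauss Y X.
Proof.
  unfold orth_seg_gauss. rewrite Rplus_comm. f_equal.
  rewrite <- (RInt_reflect (orth_seg_weight X Y)) by apply ex_RInt_orth_seg_weight.
  apply RInt_ext. intros t _. unfold orth_seg_weight. do 2 f_equal. ring.
Qed.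

Lemma seg_gauss_orth p q :
  fst p * fst q + snd p * snd q = 0 -> seg_gauss p q = orth_seg_gauss (nrm2 p) (nrm2 q).
Proof.
  intros Horth. unfold seg_gauss, orth_seg_gauss, seglen. f_equal.
  - f_equal. unfold nrm2. nra.
  - apply RInt_ext. intros t _. unfold gweight, orth_seg_weight, nrm2; cbn [fst snd]. do 3 f_equal.
    transitivity ((fst p ^ 2 + snd p ^ 2) * (1 - t) ^ 2 + (fst q ^ 2 + snd q ^ 2) * t ^ 2
                  + 2 * t * (1 - t) * (fst p * fst q + snd p * snd q)); [ring |].
    rewrite Horth. ring.
Qed.

(* Both factors of [(e^(-X u^2/2) - e^(-X w^2/2)) (e^(-Y u^2/2) - e^(-Y w^2/2))]
   have the sign of [w^2 - u^2], so the product is nonnegative. *)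
Lemma exp_rearrangement X Y u w : 0 <= X -> 0 <= Y ->
  exp (- (X * w ^ 2 + Y * u ^ 2) / 2) + exp (- (X * u ^ 2 + Y * w ^ 2) / 2)
  <= exp (- ((X + Y) * u ^ 2) / 2) + exp (- ((X + Y) * w ^ 2) / 2).
Proof.
  intros HX HY.
  set (xu := exp (- (X * u ^ 2) / 2)). set (xw := exp (- (X * w ^ 2) / 2)).
  set (yu := exp (- (Y * u ^ 2) / 2)). set (yw := exp (- (Y * w ^ 2) / 2)).
  assert (Hsplit : forall A B, exp (- (A + B) / 2) = exp (- A / 2) * exp (- B / 2)).
  { intros A B. rewrite <- exp_plus. f_equal. field. }
  rewrite !Hsplit, Rmult_plus_distr_r, Rmult_plus_distr_r, !Hsplit. fold xu xw yu yw.
  assert (Hsign : 0 <= (xu - xw) * (yu - yw)).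
  { destruct (Rle_lt_dec (u ^ 2) (w ^ 2)) as [Hle | Hlt].
    - assert (xw <= xu) by (apply exp_le_compat; nra).
      assert (yw <= yu) by (apply exp_le_compat; nra).
      nra.
    - assert (xu <= xw) by (apply exp_le_compat; nra).
      assert (yu <= yw) by (apply exp_le_compat; nra).
      nra. }
  nra.
Qed.

Lemma gauss_sqrt_mul X t : 0 <= X -> gauss (sqrt X * t) = exp (- (X * t ^ 2) / 2).
Proof. intros HX. unfold gauss. now rewrite Rpow_mult_distr, pow2_sqrt. Qed.

Lemma ex_RInt_gauss_mul c a b : ex_RInt (fun t => gauss (c * t)) a b.
Proof. apply ex_RInt_derivable. intros t. unfold gauss. auto_derive. easy. Qed.

Lemma orth_seg_gauss_le X Y :
  0 <= X -> 0 <= Y -> orth_seg_gauss X Y <= gauss_int (sqrt (X + Y)).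
Proof.
  intros HX HY. unfold orth_seg_gauss. rewrite <- gauss_int_scale.
  apply Rmult_le_compat_l; [apply sqrt_pos |].
  apply Rmult_le_reg_l with 2; [lra |].
  rewrite <- (RInt_symmetrize (orth_seg_weight X Y)) by apply ex_RInt_orth_seg_weight.
  rewrite <- (RInt_symmetrize (fun t => gauss (sqrt (X + Y) * t))) by apply ex_RInt_gauss_mul.
  apply RInt_le; [lra | | |].
  - apply ex_RInt_derivable. intros t. unfold orth_seg_weight. auto_derive. easy.
  - apply ex_RInt_derivable. intros t. unfold gauss. auto_derive. easy.
  - intros t _. rewrite !gauss_sqrt_mul by lra. unfold orth_seg_weight.
    replace (1 - (0 + 1 - t)) with t by ring. replace (0 + 1 - t) with (1 - t) by ring.
    now apply exp_rearrangement.
Qed.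

Lemma orth_seg_gauss_lt X Y : 0 <= X -> 0 <= Y -> orth_seg_gauss X Y < sqrt (PI / 2).
Proof.
  intros HX HY. eapply Rle_lt_trans; [now apply orth_seg_gauss_le |].
  apply gauss_int_lt, sqrt_pos.
Qed.

Lemma orth_seg_gauss_ge X Y :
  0 <= X -> 0 <= Y -> exp (- Y / 2) * gauss_int (sqrt X) <= orth_seg_gauss X Y.
Proof.
  intros HX HY. unfold orth_seg_gauss. rewrite <- gauss_int_scale.
  assert (Hint : exp (- Y / 2) * RInt (fun t => gauss (sqrt X * t)) 0 1
                 <= RInt (orth_seg_weight X Y) 0 1).
  { rewrite <- RInt_mult_l by apply ex_RInt_gauss_mul.
    rewrite <- (RInt_reflect (orth_seg_weight X Y)) by apply ex_RInt_orth_seg_weight.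
    apply RInt_le; [lra | | |].
    - apply ex_RInt_derivable. intros t. unfold gauss. auto_derive. easy.
    - apply ex_RInt_derivable. intros t. unfold orth_seg_weight. auto_derive. easy.
    - intros t Ht. rewrite gauss_sqrt_mul by exact HX. unfold orth_seg_weight.
      rewrite <- exp_plus. apply exp_le_compat.
      replace (1 - (0 + 1 - t)) with t by ring. replace (0 + 1 - t) with (1 - t) by ring.
      assert (Hsq : (1 - t) ^ 2 <= 1) by nra.
      assert (Y * (1 - t) ^ 2 <= Y) by nra. lra. }
  assert (Hpos : 0 <= exp (- Y / 2) * RInt (fun t => gauss (sqrt X * t)) 0 1).
  { apply Rmult_le_pos; [left; apply exp_pos |].
    apply RInt_ge_0; [lra | apply ex_RInt_gauss_mul |]. intros t _. left. apply exp_pos. }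
  rewrite <- Rmult_assoc, (Rmult_comm (exp _)), Rmult_assoc.
  apply Rmult_le_compat; [apply sqrt_pos | exact Hpos | apply sqrt_le_1_alt; lra | exact Hint].
Qed.

Lemma semiaxis_quad_eq a b c d :
  semiaxis_quad a b c d =
  / (2 * PI) * (orth_seg_gauss (a ^ 2) (b ^ 2) + orth_seg_gauss (b ^ 2) (c ^ 2)
                + orth_seg_gauss (c ^ 2) (d ^ 2) + orth_seg_gauss (d ^ 2) (a ^ 2)).
Proof.
  unfold semiaxis_quad, gauss_perim_quad.
  rewrite !seg_gauss_orth by (cbn [fst snd]; ring).
  unfold nrm2; cbn [fst snd].
  replace (a ^ 2 + 0 ^ 2) with (a ^ 2) by ring. replace (0 ^ 2 + b ^ 2) with (b ^ 2) by ring.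
  replace ((- c) ^ 2 + 0 ^ 2) with (c ^ 2) by ring.
  replace (0 ^ 2 + (- d) ^ 2) with (d ^ 2) by ring.
  reflexivity.
Qed.

Lemma sqrt_2_PI_eq : / (2 * PI) * (4 * sqrt (PI / 2)) = sqrt (2 / PI).
Proof.
  pose proof PI_RGT_0.
  replace (2 / PI) with (PI / 2 * (2 / PI) ^ 2) by (field; lra).
  rewrite sqrt_mult_alt, sqrt_pow2 by (apply Rdiv_le_0_compat || apply pow2_ge_0; lra).
  field. lra.
Qed.

Lemma semiaxis_quad_lt a b c d : semiaxis_quad a b c d < sqrt (2 / PI).
Proof.
  pose proof PI_RGT_0.
  rewrite semiaxis_quad_eq, <- sqrt_2_PI_eq.
  apply Rmult_lt_compat_l; [apply Rinv_0_lt_compat; lra |].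
  pose proof (orth_seg_gauss_lt (a ^ 2) (b ^ 2)). pose proof (orth_seg_gauss_lt (b ^ 2) (c ^ 2)).
  pose proof (orth_seg_gauss_lt (c ^ 2) (d ^ 2)). pose proof (orth_seg_gauss_lt (d ^ 2) (a ^ 2)).
  pose proof (pow2_ge_0 a). pose proof (pow2_ge_0 b).
  pose proof (pow2_ge_0 c). pose proof (pow2_ge_0 d).
  intuition lra.
Qed.

Lemma rhombus_ge x :
  0 < x -> / (2 * PI) * (4 * (gauss (/ x) * gauss_int x)) <= semiaxis_quad x (/ x) x (/ x).
Proof.
  intros Hx. pose proof PI_RGT_0.
  rewrite semiaxis_quad_eq, (orth_seg_gauss_sym ((/ x) ^ 2)).
  apply Rmult_le_compat_l; [left; apply Rinv_0_lt_compat; lra |].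
  assert (Hge := orth_seg_gauss_ge (x ^ 2) ((/ x) ^ 2) (pow2_ge_0 _) (pow2_ge_0 _)).
  rewrite sqrt_pow2 in Hge by lra.
  unfold gauss. lra.
Qed.

Lemma is_lim_rhombus : is_lim (fun x => semiaxis_quad x (/ x) x (/ x)) p_infty (sqrt (2 / PI)).
Proof.
  apply (is_lim_le_le_loc (fun x => / (2 * PI) * (4 * (gauss (/ x) * gauss_int x)))
                          (fun _ => sqrt (2 / PI))).
  - exists 0. intros x Hx. split; [now apply rhombus_ge | left; apply semiaxis_quad_lt].
  - rewrite <- sqrt_2_PI_eq, <- (Rmult_1_l (sqrt (PI / 2))).
    apply (is_lim_scal_l _ _ _ (4 * (1 * sqrt (PI / 2)))).
    apply (is_lim_scal_l _ _ _ (1 * sqrt (PI / 2))).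
    apply (is_lim_mult _ _ _ 1 (sqrt (PI / 2))); [| apply is_lim_gauss_int | easy].
    replace 1 with (gauss 0) by (unfold gauss; rewrite <- exp_0; f_equal; field).
    apply (filterlim_comp _ _ _ (fun x => / x) gauss _ (locally 0)).
    + apply (is_lim_inv (fun x => x) p_infty p_infty); [apply is_lim_id | discriminate].
    + apply continuous_gauss.
  - apply is_lim_const.
Qed.

Theorem theorem1p2 :
  (forall a b c d : R, 0 < a -> 0 < b -> 0 < c -> 0 < d ->
     semiaxis_quad a b c d < sqrt (2 / PI)) /\
  is_lim_seq (fun n : nat => semiaxis_quad (INR n) (/ INR n) (INR n) (/ INR n))
             (sqrt (2 / PI)).
Proof.
  split.
  - intros a b c d _ _ _ _. apply semiaxis_quad_lt.
  - apply (is_lim_comp_seq (fun x => semiaxis_quad x (/ x) x (/ x)) INR p_infty).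
    + exact is_lim_rhombus.
    + exists 0%nat. intros n _. discriminate.
    + exact is_lim_seq_INR.
Qed.
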